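(* Let $\mathsf{L}\in\{\mathbf{PD},\mathsf{InqL},\mathbf{PT}\}$. For all formulas $\phi,\psi$ in the language of $\mathsf{L}$ and every flat substitution $\sigma$ of $\mathsf{L}$: if $\phi\vdash_{\mathsf L}\psi$ then $\sigma(\phi)\vdash_{\mathsf L}\sigma(\psi)$. In particular, $\phi\equiv\psi$ implies $\sigma(\phi)\equiv\sigma(\psi)$ for every flat substitution $\sigma$.
   Context: Fix a countably infinite set Prop of propositional variables. A valuation is a function $v:\mathrm{Prop}\to\{0,1\}$; a team is a set of valuations. Formulas of $\mathbf{PT}$: $\phi::=p\mid\bot\mid\top\mid\,=\!(\phi_1,\dots,\phi_n,\phi)\mid\neg\phi\mid\phi\wedge\phi\mid\phi\otimes\phi\mid\phi\vee\phi\mid\phi\to\phi$. Satisfaction on a team $X$: $X\models p$ iff $v(p)=1$ for all $v\in X$; $X\models\bot$ iff $X=\emptyset$; $X\models\top$ always; $\wedge$ is conjunction of conditions; $X\models\phi\otimes\psi$ iff $X=Y\cup Z$ with $Y\models\phi$, $Z\models\psi$; $X\models\phi\vee\psi$ iff $X\models\phi$ or $X\models\psi$; $X\models\phi\to\psi$ iff every $Y\subseteq X$ with $Y\models\phi$ satisfies $\psi$; $X\models\neg\phi$ iff $\{v\}\not\models\phi$ for all $v\in X$; $X\models\,=\!(\phi_1,\dots,\phi_n,\psi)$ iff $X\models\bigwedge_i(\phi_i\vee(\phi_i\to\bot))\to(\psi\vee(\psi\to\bot))$. $\phi$ is flat if for all teams $X$: $X\models\phi$ iff $\{v\}\models\phi$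 for all $v\in X$. Formulas of $\mathbf{PD}$: $\phi::=p\mid\bot\mid\top\mid\,=\!(\vec\alpha,\beta)\mid\neg\phi\mid\phi\wedge\phi\mid\phi\otimes\phi$ with $\vec\alpha,\beta$ flat, evaluated by the same clauses (for flat arguments: $X\models\,=\!(\vec\alpha,\beta)$ iff any $v,v'\in X$ agreeing on the truth of each $\alpha_i$ on singletons also agree on the truth of $\beta$). $\mathsf{InqL}$: formulas built from $p,\bot,\top$ by $\wedge,\vee,\to$ with the same clauses. For finite $\Gamma$, $\Gamma\vdash_{\mathsf L}\phi$ iff all formulas are in the language of $\mathsf L$ and every team satisfying all of $\Gamma$ satisfies $\phi$. $\phi\equiv\psi$ means $\phi$ and $\psi$ are satisfied by exactly the same teams. A substitution of $\mathsf L$ is a map on $\mathsf L$-formulas commuting with all connectives and atoms (including $\neg$ and $=\!(\cdot)$); it is flat if each $\sigma(p)$ is flat. *)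

From Stdlib Require Import List.
Import ListNotations.

(* Prop = nat (a countably infinite set of propositional variables). *)
Definition valuation := nat -> bool.
Definition team := valuation -> Prop.

Definition subteam (Y X : team) : Prop := forall v, Y v -> X v.
Definition empty_team (X : team) : Prop := forall v, ~ X v.
Definition singleton (v : valuation) : team := fun w => w = v.

(* Formulas of PT. Dep [phi_1;...;phi_n] phi is  =(phi_1,...,phi_n,phi). *)
Inductive form : Type :=
| Atom (p : nat)
| Bot
| Top
| Dep (args : list form) (f : form)
| Neg (f : form)
| And (f g : form)
| Tens (f g : form)
| Or (f g : form)
| Imp (f g : form).

Fixpoint sat (f : form) (X : team) {struct f} : Prop :=
  match f with
  | Atom p => forall v, X v -> v p = true
  | Bot => empty_team X
  | Top => True
  | Dep args g =>
      (* X |= /\_i (phi_i \/ (phi_i -> bot)) -> (g \/ (g -> bot)) *)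
      forall Y, subteam Y X ->
        (let fix all_sat (l : list form) : Prop :=
             match l with
             | [] => True
             | h :: t =>
                 (sat h Y \/ (forall Z, subteam Z Y -> sat h Z -> empty_team Z))
                 /\ all_sat t
             end in all_sat args) ->
        (sat g Y \/ (forall Z, subteam Z Y -> sat g Z -> empty_team Z))
  | Neg g => forall v, X v -> ~ sat g (singleton v)
  | And g h => sat g X /\ sat h X
  | Tens g h => exists Y Z, (forall v, X v <-> (Y v \/ Z v)) /\ sat g Y /\ sat h Z
  | Or g h => sat g X \/ sat h X
  | Imp g h => forall Y, subteam Y X -> sat g Y -> sat h Y
  end.

Definition flat (f : form) : Prop :=
  forall X, sat f X <-> (forall v, X v -> sat f (singleton v)).

Inductive logic : Type := PD | InqL | PT.

Fixpoint inPD (f : form) : Prop :=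
  match f with
  | Atom _ | Bot | Top => True
  | Dep args g =>
      (let fix all_in (l : list form) : Prop :=
           match l with
           | [] => True
           | h :: t => (inPD h /\ flat h) /\ all_in t
           end in all_in args) /\ inPD g /\ flat g
  | Neg g => inPD g
  | And g h | Tens g h => inPD g /\ inPD h
  | Or _ _ | Imp _ _ => False
  end.

Fixpoint inInqL (f : form) : Prop :=
  match f with
  | Atom _ | Bot | Top => True
  | And g h | Or g h | Imp g h => inInqL g /\ inInqL h
  | Dep _ _ | Neg _ | Tens _ _ => False
  end.

Definition inL (L : logic) (f : form) : Prop :=
  match L with
  | PD => inPD f
  | InqL => inInqL f
  | PT => True
  end.

Fixpoint subst (s : nat -> form) (f : form) : form :=
  match f with
  | Atom p => s p
  | Bot => Bot
  | Top => Top
  | Dep args g => Dep (map (subst s) args) (subst s g)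
  | Neg g => Neg (subst s g)
  | And g h => And (subst s g) (subst s h)
  | Tens g h => Tens (subst s g) (subst s h)
  | Or g h => Or (subst s g) (subst s h)
  | Imp g h => Imp (subst s g) (subst s h)
  end.

Definition subst_of (L : logic) (s : nat -> form) : Prop := forall p, inL L (s p).
Definition flat_subst (s : nat -> form) : Prop := forall p, flat (s p).

Definition entails (L : logic) (Gamma : list form) (phi : form) : Prop :=
  (forall g, In g Gamma -> inL L g) /\ inL L phi /\
  (forall X : team, (forall g, In g Gamma -> sat g X) -> sat phi X).

Definition equiv (phi psi : form) : Prop := forall X : team, sat phi X <-> sat psi X.

(* A flat substitution s acts on valuations: v is sent to the valuation v^s
   with v^s(p) = 1 iff {v} |= s(p).  Flatness of s(p) gives
   X |= s(p) iff X^s |= p, where X^s is the image of X.  Every subteam of X^s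
   is the image of a subteam of X, and images commute with unions and
   singletons, so the equivalence X |= s(phi) iff X^s |= phi propagates through
   every connective.  Entailment and equivalence are therefore preserved, and
   the language of L is closed under s because flatness is preserved too. *)

From Stdlib Require Import List.
From Stdlib Require Import ClassicalEpsilon FunctionalExtensionality PropExtensionality.
Import ListNotations.

Section FormNestedInd.
Variable P : form -> Prop.
Hypothesis HAtom : forall p, P (Atom p).
Hypothesis HBot : P Bot.
Hypothesis HTop : P Top.
Hypothesis HDep : forall args g, Forall P args -> P g -> P (Dep args g).
Hypothesis HNeg : forall g, P g -> P (Neg g).
Hypothesis HAnd : forall g h, P g -> P h -> P (And g h).
Hypothesis HTens : forall g h, P g -> P h -> P (Tens g h).
Hypothesis HOr : forall g h, P g -> P h -> P (Or g h).
Hypothesis HImp : forall g h, P g -> P h -> P (Imp g h).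

Fixpoint form_nested_ind (f : form) : P f :=
  match f with
  | Atom p => HAtom p
  | Bot => HBot
  | Top => HTop
  | Dep args g => HDep args g
      ((fix go (l : list form) : Forall P l :=
         match l with
         | [] => Forall_nil _
         | h :: t => Forall_cons _ (form_nested_ind h) (go t)
         end) args)
      (form_nested_ind g)
  | Neg g => HNeg g (form_nested_ind g)
  | And g h => HAnd g h (form_nested_ind g) (form_nested_ind h)
  | Tens g h => HTens g h (form_nested_ind g) (form_nested_ind h)
  | Or g h => HOr g h (form_nested_ind g) (form_nested_ind h)
  | Imp g h => HImp g h (form_nested_ind g) (form_nested_ind h)
  end.
End FormNestedInd.

Definition sat_decided (f : form) (Y : team) : Prop :=
  sat f Y \/ (forall Z, subteam Z Y -> sat f Z -> empty_team Z).

Lemma sat_Dep args g X :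
  sat (Dep args g) X <->
  forall Y, subteam Y X -> Forall (fun h => sat_decided h Y) args -> sat_decided g Y.
Proof.
  simpl; unfold sat_decided.
  split; intros H Y HY Hargs; apply H; auto; clear H HY;
    induction args as [|h t IH]; simpl in *; auto.
  - apply Forall_cons_iff in Hargs as [Hh Ht]; exact (conj Hh (IH Ht)).
  - destruct Hargs as [Hh Ht]; exact (Forall_cons _ Hh (IH Ht)).
Qed.

Lemma team_ext (X Y : team) : (forall v, X v <-> Y v) -> X = Y.
Proof.
  intros H; apply functional_extensionality; intros v.
  apply propositional_extensionality, H.
Qed.

Section TeamImage.
Variable f : valuation -> valuation.

Definition image (X : team) : team := fun w => exists v, X v /\ w = f v.

Definition preimage_in (X Y : team) : team := fun v => X v /\ Y (f v).

Lemma image_preimage_in X Y : subteam Y (image X) -> image (preimage_in X Y) = Y.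
Proof.
  intros HY; apply team_ext; intros w; split.
  - intros [v [[_ Hv] ->]]; exact Hv.
  - intros Hw; destruct (HY w Hw) as [v [Xv ->]]; exists v; repeat split; auto.
Qed.

Lemma preimage_in_subteam X Y : subteam (preimage_in X Y) X.
Proof. intros v [Xv _]; exact Xv. Qed.

Lemma image_subteam Y X : subteam Y X -> subteam (image Y) (image X).
Proof. intros H w [v [Yv ->]]; exists v; auto. Qed.

Lemma empty_image X : empty_team (image X) <-> empty_team X.
Proof.
  split.
  - intros H v Xv; apply (H (f v)); exists v; auto.
  - intros H w [v [Xv _]]; exact (H v Xv).
Qed.

Lemma image_singleton v : image (singleton v) = singleton (f v).
Proof.
  apply team_ext; intros w; split.
  - intros [u [-> ->]]; reflexivity.
  - intros ->; exists v; split; reflexivity.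
Qed.

Lemma forall_image (A : valuation -> Prop) X :
  (forall v, X v -> A (f v)) <-> (forall w, image X w -> A w).
Proof.
  split.
  - intros H w [v [Xv ->]]; auto.
  - intros H v Xv; apply H; exists v; auto.
Qed.

Lemma forall_subteam_image (A B A' B' : team -> Prop) X :
  (forall Z, A Z <-> A' (image Z)) -> (forall Z, B Z <-> B' (image Z)) ->
  (forall Z, subteam Z X -> A Z -> B Z) <->
  (forall Z', subteam Z' (image X) -> A' Z' -> B' Z').
Proof.
  intros HA HB; split.
  - intros H Z' HZ' HA'; rewrite <- (image_preimage_in X Z' HZ') in HA' |- *.
    apply HB, H; [apply preimage_in_subteam | apply HA; exact HA'].
  - intros H Z HZ HAZ; apply HB, H; [apply image_subteam; auto | apply HA; auto].
Qed.

Lemma image_union X Y Z :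
  (forall v, X v <-> Y v \/ Z v) ->
  forall w, image X w <-> image Y w \/ image Z w.
Proof.
  intros E w; split.
  - intros [v [Xv ->]]; apply E in Xv as [Yv|Zv]; [left|right]; exists v; auto.
  - intros [[v [Yv ->]]|[v [Zv ->]]]; exists v; split; auto; apply E; auto.
Qed.

Lemma preimage_in_union X Y' Z' :
  (forall w, image X w <-> Y' w \/ Z' w) ->
  forall v, X v <-> preimage_in X Y' v \/ preimage_in X Z' v.
Proof.
  intros E v; split.
  - intros Xv; assert (Hi : image X (f v)) by (exists v; auto).
    apply E in Hi as [?|?]; [left|right]; split; auto.
  - intros [[Xv _]|[Xv _]]; exact Xv.
Qed.

Lemma sat_decided_image g g' :
  (forall Z, sat g' Z <-> sat g (image Z)) ->
  forall Y, sat_decided g' Y <-> sat_decided g (image Y).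
Proof.
  intros Hg Y; unfold sat_decided; rewrite Hg.
  rewrite (forall_subteam_image _ _ _ _ Y Hg (fun Z => iff_sym (empty_image Z))).
  tauto.
Qed.

Section SubstImage.
Variable s : nat -> form.
Hypothesis sat_s_image : forall p X, sat (s p) X <-> sat (Atom p) (image X).

Lemma sat_subst_image phi : forall X, sat (subst s phi) X <-> sat phi (image X).
Proof.
  induction phi as [p| | |args g Hargs IHg|g IHg|g h IHg IHh|g h IHg IHh
                   |g h IHg IHh|g h IHg IHh] using form_nested_ind; intros X.
  - apply sat_s_image.
  - symmetry; apply empty_image.
  - simpl; tauto.
  - simpl subst; rewrite !sat_Dep.
    apply forall_subteam_image; [|apply sat_decided_image; exact IHg].
    intros Z; induction Hargs as [|h t Hh _ IHt]; simpl.
    + split; constructor.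
    + rewrite !Forall_cons_iff, (sat_decided_image h _ Hh), IHt; tauto.
  - simpl.
    setoid_rewrite IHg; setoid_rewrite image_singleton.
    apply (forall_image (fun w => ~ sat g (singleton w))).
  - simpl; rewrite IHg, IHh; tauto.
  - simpl; split.
    + intros [Y [Z [E [HY HZ]]]]; exists (image Y), (image Z).
      rewrite <- IHg, <- IHh; auto using image_union.
    + intros [Y' [Z' [E [HY HZ]]]].
      exists (preimage_in X Y'), (preimage_in X Z').
      rewrite IHg, IHh, !image_preimage_in; auto using preimage_in_union;
        intros w Hw; apply E; auto.
  - simpl; rewrite IHg, IHh; tauto.
  - simpl; apply forall_subteam_image; auto.
Qed.

End SubstImage.
End TeamImage.

Section FlatSubst.
Variable s : nat -> form.
Hypothesis s_flat : flat_subst s.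

Definition flat_val (v : valuation) : valuation := fun p =>
  if excluded_middle_informative (sat (s p) (singleton v)) then true else false.

Lemma flat_val_true v p : flat_val v p = true <-> sat (s p) (singleton v).
Proof.
  unfold flat_val; destruct excluded_middle_informative; split; congruence || tauto.
Qed.

Lemma sat_subst phi X : sat (subst s phi) X <-> sat phi (image flat_val X).
Proof.
  revert X; apply sat_subst_image; intros p X; simpl.
  rewrite (s_flat p X), <- (forall_image flat_val (fun w => w p = true)).
  setoid_rewrite flat_val_true; reflexivity.
Qed.

Lemma subst_flat phi : flat phi -> flat (subst s phi).
Proof.
  intros Hphi X; rewrite sat_subst, (Hphi (image flat_val X)).
  setoid_rewrite sat_subst; setoid_rewrite image_singleton.
  symmetry; apply (forall_image flat_val (fun w => sat phi (singleton w))).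
Qed.

Lemma inL_subst L phi : subst_of L s -> inL L phi -> inL L (subst s phi).
Proof.
  intros Hs; destruct L; simpl in *; auto.
  - induction phi as [p| | |args g Hargs IHg| | | | |] using form_nested_ind;
      simpl; try tauto; [intros _; apply Hs|].
    intros [Hin [Hg Hgflat]]; split; [|split; auto using subst_flat].
    clear IHg Hg Hgflat; induction Hargs as [|h t IHh _ IHt]; simpl in *; auto.
    destruct Hin as [[Hh Hhflat] Ht]; exact (conj (conj (IHh Hh) (subst_flat h Hhflat)) (IHt Ht)).
  - induction phi using form_nested_ind; simpl; try tauto; intros _; apply Hs.
Qed.

End FlatSubst.

Theorem theorem3p7 :
  forall (L : logic) (phi psi : form) (s : nat -> form),
    inL L phi -> inL L psi -> subst_of L s -> flat_subst s ->
    (entails L [phi] psi -> entails L [subst s phi] (subst s psi)) /\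
    (equiv phi psi -> equiv (subst s phi) (subst s psi)).
Proof.
  intros L phi psi s Hphi Hpsi Hs Hflat; split.
  - intros [_ [_ Hent]]; repeat split.
    + intros g [<-|[]]; apply inL_subst; auto.
    + apply inL_subst; auto.
    + intros X HX; rewrite sat_subst by exact Hflat; apply Hent.
      intros g [<-|[]]; rewrite <- sat_subst by exact Hflat; apply HX; left; auto.
  - intros Heq X; rewrite !sat_subst by exact Hflat; apply Heq.
Qed.
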